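(* Let $a_1,\dots,a_s$ be nonnegative integers. Then for arbitrary integers $k_1,\dots,k_s$ with $1\le k_i\le a_1+\cdots+a_s-1$ for all $i$, either $1\le k_i\le a_i-1$ for some $i$, or $1-a_j\le k_i-k_j\le a_i-1$ for some $i<j$. *)

From Stdlib Require Import ZArith List.
Open Scope Z_scope.

(* sumZ a s = a 0 + a 1 + ... + a (s-1)  (indices 0..s-1 stand for 1..s) *)
Fixpoint sumZ (a : nat -> Z) (s : nat) : Z :=
  match s with
  | O => 0
  | S n => sumZ a n + a n
  end.

(* If neither alternative holds, then k_i >= a_i for every i, and the integer
   blocks [k_i - a_i, k_i) are pairwise disjoint and contained in
   [0, a_1 + ... + a_s - 1).  Disjoint blocks of total length a_1 + ... + a_s
   cannot fit into a segment that is one shorter.  The packing bound is proved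
   by induction on the number of blocks: delete the last block and shift every
   block to its right down by its length, which closes the gap it leaves. *)

From Stdlib Require Import ZArith Lia Classical.
Open Scope Z_scope.

(* Block i is the integer interval [k i - a i, k i). *)
Definition disjoint_blocks (a k : nat -> Z) (i j : nat) : Prop :=
  k j <= k i - a i \/ k i <= k j - a j.

Definition close_gap (a k : nat -> Z) (m : nat) (i : nat) : Z :=
  if k i <=? k m - a m then k i else k i - a m.

Section CloseGap.

Variables (a k : nat -> Z) (m : nat).

Lemma close_gap_bounds (B : Z) (i : nat) :
  a m <= k m <= B -> a i <= k i <= B -> disjoint_blocks a k i m ->
  a i <= close_gap a k m i <= B - a m.
Proof.
  unfold close_gap, disjoint_blocks; intros Hm Hi Him.
  destruct (Z.leb_spec (k i) (k m - a m)); lia.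
Qed.

Lemma close_gap_disjoint (i j : nat) :
  disjoint_blocks a k i m -> disjoint_blocks a k j m -> disjoint_blocks a k i j ->
  disjoint_blocks a (close_gap a k m) i j.
Proof.
  unfold close_gap, disjoint_blocks; intros Him Hjm Hij.
  destruct (Z.leb_spec (k i) (k m - a m)), (Z.leb_spec (k j) (k m - a m)); lia.
Qed.

End CloseGap.

Lemma sumZ_le_of_disjoint_blocks (a : nat -> Z) (n : nat) :
  forall (k : nat -> Z) (B : Z), 0 <= B ->
  (forall i, (i < n)%nat -> a i <= k i <= B) ->
  (forall i j, (i < j)%nat -> (j < n)%nat -> disjoint_blocks a k i j) ->
  sumZ a n <= B.
Proof.
  induction n as [|n IH]; intros k B HB Hfit Hdisj; simpl; [assumption|].
  assert (Hn : a n <= k n <= B) by (apply Hfit; lia).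
  enough (sumZ a n <= B - a n) by lia.
  apply (IH (close_gap a k n)); [lia | |].
  - intros i Hi; apply close_gap_bounds; [assumption | apply Hfit; lia | apply Hdisj; lia].
  - intros i j Hij Hj; apply close_gap_disjoint; apply Hdisj; lia.
Qed.

(* [ha] is unused: the packing bound holds for blocks of any integer length. *)
Theorem mainTheorem6 (s : nat) (a k : nat -> Z) (hs : (1 <= s)%nat)
  (ha : forall i : nat, (i < s)%nat -> 0 <= a i)
  (hk : forall i : nat, (i < s)%nat -> 1 <= k i <= sumZ a s - 1) :
  (exists i : nat, (i < s)%nat /\ 1 <= k i <= a i - 1) \/
  (exists i j : nat, (i < j)%nat /\ (j < s)%nat /\
     1 - a j <= k i - k j <= a i - 1).
Proof.
  apply NNPP; intros Hnone.
  assert (Hfit : forall i, (i < s)%nat -> a i <= k i <= sumZ a s - 1).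
  { intros i Hi; specialize (hk i Hi); split; [|lia].
    apply Z.nlt_ge; intros Hlt.
    apply Hnone; left; exists i; split; [assumption | lia]. }
  assert (Hdisj : forall i j, (i < j)%nat -> (j < s)%nat -> disjoint_blocks a k i j).
  { intros i j Hij Hj; unfold disjoint_blocks.
    destruct (Z_le_gt_dec (1 - a j) (k i - k j)); [|lia].
    destruct (Z_le_gt_dec (k i - k j) (a i - 1)); [|lia].
    exfalso; apply Hnone; right; exists i, j; auto. }
  assert (HB : 0 <= sumZ a s - 1) by (specialize (hk 0%nat ltac:(lia)); lia).
  pose proof (sumZ_le_of_disjoint_blocks a s k _ HB Hfit Hdisj).
  lia.
Qed.
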